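(* Let $n$ and $b$ be integers with $1\le b<\frac{n}{2}-1$, and let $BT\in\mathcal{CT}^*_{n,b}$. Then \[ M_2(BT)\le\begin{cases} 4n+16b-12 & \text{if } 1\le b\le\frac{n-4}{5},\\ 6n+6b-20 & \text{if } \frac{n-4}{5}<b<\frac{n-2}{3},\\ 10n-6b-28 & \text{if } \frac{n-2}{3}\le b<\frac{3n-4}{7},\\ 16n-20b-36 & \text{if } \frac{3n-4}{7}\le b<\frac{n}{2}-1. \end{cases} \] Equality holds if and only if $BT\in\mathcal{BT}'_1(n,b)$ when $1\le b<\frac{n-2}{3}$, and $BT\in\mathcal{BT}'_2(n,b)$ when $\frac{n-2}{3}\le b<\frac{n}{2}-1$.
   Context: A chemical tree is a tree with maximum degree at most $4$; $d_v$ is the degree of $v$. A pendent vertex has degree $1$; a branching vertex has degree greater than $2$. A pendent path is a path $u_0\cdots u_r$ ($r\ge1$) with $u_0$ pendent, $u_r$ branching and all internal vertices of degree $2$; an internal path is such a path with both end vertices branching and all internal vertices of degree $2$; its length is $r$. $\mathcal{CT}^*_{n,b}$ is the class of all $n$-vertex chemical trees with exactly $b$ branching vertices. For $1\le b<\frac{n-2}{3}$, $\mathcal{BT}_1(n,b)$ is the set of trees in $\mathcal{CT}^*_{n,b}$ whose degree sequence has $b$ entries $4$, $n-3b-2$ entries $2$ and $2b+2$ entries $1$; for $\frac{n-2}{3}\le b<\frac{n}{2}-1$, $\mathcal{BT}_2(n,b)$ is the set of trees in $\mathcal{CT}^*_{n,b}$ whose degree sequence has $n-2b-2$ entries $4$,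 $3b-n+2$ entries $3$ and $n-b$ entries $1$. $\mathcal{BT}'_1(n,b)$ and $\mathcal{BT}'_2(n,b)$ are the subclasses of $\mathcal{BT}_1(n,b)$ and $\mathcal{BT}_2(n,b)$, respectively, of trees satisfying all of: (1) every internal path (if any) has length $1$; (2) if some pendent vertex is adjacent to a vertex of degree $4$, then there are no two adjacent vertices of degree $3$; (3) if some pendent vertex is adjacent to a branching vertex, then there is no pendent path of length greater than $2$; (4) every vertex of degree $3$ (if any) has at most one neighbor of degree $4$; (5) there is at least one vertex of degree $4$ and the subgraph induced by the vertices of degree $4$ is a tree. The second Zagreb index is $M_2(G)=\sum_{uv\in E(G)}d_ud_v$. *)

From mathcomp Require Import all_boot all_order all_algebra.
Set Implicit Arguments. Unset Strict Implicit. Unset Printing Implicit Defensive.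

Section Graphs.
Variable T : finType.
Implicit Types (e : rel T) (S : {pred T}) (x v : T) (p : seq T).

Definition simple_graph e := symmetric e /\ irreflexive e.

Definition deg e v : nat := #|[pred u | e v u]|.

Definition pendent e v : bool := deg e v == 1.
Definition branching e v : bool := 2 < deg e v.

Definition restrict e S : rel T := [rel x y | [&& e x y, x \in S & y \in S]].

Definition is_cycle e x p : bool :=
  [&& path e x p, uniq (x :: p), 2 <= size p & e (last x p) x].

Definition connected_on e S :=
  forall u v, u \in S -> v \in S -> connect (restrict e S) u v.
Definition acyclic_on e S := forall x p, ~~ is_cycle (restrict e S) x p.

Definition is_tree_on e S := connected_on e S /\ acyclic_on e S.
Definition is_tree e := is_tree_on e predT.

Definition chemical_tree e := simple_graph e /\ is_tree e /\ forall v, deg e v <= 4.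

(* a (simple) path x :: p of length size p *)
Definition gpath e x p : bool := path e x p && uniq (x :: p).
Definition inner x p : seq T := behead (belast x p).

Definition pendent_path e x p : bool :=
  [&& gpath e x p, 1 <= size p, pendent e x, branching e (last x p)
    & all (fun w => deg e w == 2) (inner x p)].

Definition internal_path e x p : bool :=
  [&& gpath e x p, 1 <= size p, branching e x, branching e (last x p)
    & all (fun w => deg e w == 2) (inner x p)].

Definition ndeg e k : nat := #|[pred v | deg e v == k]|.

(* second Zagreb index: sum over edges uv of d_u d_v; each unordered edge
   {u,v} is counted once via an enumeration order on T *)
Definition M2 e : nat :=
  \sum_(u : T) \sum_(v : T | (enum_rank u < enum_rank v) && e u v) deg e u * deg e v.

(* conditions (1)-(5) defining BT'_1 and BT'_2 inside BT_1, BT_2 *)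
Definition prime_conditions e :=
  [/\ (forall x p, internal_path e x p -> size p = 1),
      ((exists u v, [&& pendent e u, e u v & deg e v == 4]) ->
                 ~ (exists u v, [&& e u v, deg e u == 3 & deg e v == 3])),
      ((exists u v, [&& pendent e u, e u v & branching e v]) ->
                 forall x p, pendent_path e x p -> size p <= 2),
      (forall v, deg e v == 3 ->
                 #|[pred u | e v u && (deg e u == 4)]| <= 1)
    & ((exists v, deg e v == 4) /\
                 is_tree_on e [pred v | deg e v == 4])].

End Graphs.

Definition CTstar (n b : nat) (e : rel 'I_n) :=
  chemical_tree e /\ #|[pred v | branching e v]| = b.
Arguments CTstar : clear implicits.

Definition BT1 (n b : nat) (e : rel 'I_n) :=
  [/\ CTstar n b e, ndeg e 4 = b, ndeg e 2 = n - 3 * b - 2 & ndeg e 1 = 2 * b + 2].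
Arguments BT1 : clear implicits.

Definition BT2 (n b : nat) (e : rel 'I_n) :=
  [/\ CTstar n b e, ndeg e 4 = n - 2 * b - 2, ndeg e 3 = 3 * b + 2 - n
    & ndeg e 1 = n - b].
Arguments BT2 : clear implicits.

Definition BT1' (n b : nat) (e : rel 'I_n) := BT1 n b e /\ prime_conditions e.
Arguments BT1' : clear implicits.
Definition BT2' (n b : nat) (e : rel 'I_n) := BT2 n b e /\ prime_conditions e.
Arguments BT2' : clear implicits.

From mathcomp Require Import all_boot all_order all_algebra.
From mathcomp Require Import zify.
Import GRing.Theory Num.Theory.
Set Implicit Arguments. Unset Strict Implicit. Unset Printing Implicit Defensive.

(* Let N_k be the number of vertices of degree k and m_ij the number of ordered
   pairs of adjacent vertices of degrees i and j.  In a chemical tree these obey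
   linear identities: the vertex count, the handshake identity
   sum_k k N_k = 2n - 2, the row sums sum_j m_ij = i N_i, and
   2 M2 = sum_ij i j m_ij.  Acyclicity adds two inequalities: the branching
   vertices, and the vertices of degree 4, induce forests, hence span at most one
   edge fewer than vertices, with equality iff they induce a tree.  In each range
   of b the bound follows from these linear constraints alone, and equality forces
   the degree sequence of BT_1 (resp. BT_2), a tree on the degree-4 vertices and
   the vanishing of one edge count.  Indeed, with x_ij the number of edges whose
   ends have degrees i and j, a tree of BT_1 whose degree-4 vertices induce a tree
   has M2 = 4n + 16b - 12 - 2 x_14 = 6n + 6b - 20 - 2 x_22, and one of BT_2 has
   M2 = 10n - 6b - 28 - 2 x_33 = 16n - 20b - 36 - 2 x_14; the range of b decides
   which of the two counts is the smaller one.  Given the tree on the degree-4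
   vertices, conditions (1)-(5) amount to x_14 x_22 = 0 (resp. x_14 x_33 = 0):
   a connected induced subgraph of a tree allows no detour through outside
   vertices, which gives (1) and (4), and two adjacent vertices of degree 2 lie on
   a long pendent or internal path. *)


Section InducedSubgraph.
Variables (T : finType) (e : rel T).
Hypotheses (e_sym : symmetric e) (e_irr : irreflexive e).
Implicit Types (S : {pred T}) (u v w x y : T).

Definition deg_in S v := #|[pred u | (u \in S) && e v u]|.
Definition deg_sum_in S := \sum_(u in S) deg_in S u.

Lemma eq_deg_in S S' v : S =i S' -> deg_in S v = deg_in S' v.
Proof. by move=> eqS; apply: eq_card => u; rewrite !inE eqS. Qed.

Lemma eq_deg_sum_in S S' : S =i S' -> deg_sum_in S = deg_sum_in S'.
Proof.
by move=> eqS; rewrite /deg_sum_in (eq_bigl _ _ eqS); apply: eq_bigr => u _; apply: eq_deg_in.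
Qed.

Lemma deg_in_predU1 w S u :
  w \notin S -> deg_in [predU1 w & S] u = e u w + deg_in S u.
Proof.
move=> wS; rewrite /deg_in (cardD1 w) !inE eqxx /=; congr (_ + _).
by apply: eq_card => z; rewrite !inE; case: (z =P w) => [->|] /=; rewrite ?(negbTE wS).
Qed.

Lemma deg_in_predD1 S v : deg_in [predD1 S & v] v = deg_in S v.
Proof. by apply: eq_card => u; rewrite !inE; case: (u =P v) => [->|]; rewrite ?e_irr ?andbF. Qed.

Lemma deg_sum_in_predU1 w S :
  w \notin S -> deg_sum_in [predU1 w & S] = deg_sum_in S + 2 * deg_in S w.
Proof.
move=> wS; rewrite /deg_sum_in (bigD1 w) ?inE ?eqxx //= deg_in_predU1 // e_irr.
rewrite (eq_bigl (mem S)) => [|u]; last first.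
  by rewrite !inE; case: (u =P w) => [->|]; rewrite ?(negbTE wS) ?andbF ?andbT.
under eq_bigr => u _ do rewrite deg_in_predU1 //.
rewrite big_split /=.
have -> : \sum_(u in S) (e u w : nat) = deg_in S w.
  rewrite /deg_in -sum1_card big_mkcond [RHS]big_mkcond /=; apply: eq_bigr => u _.
  by rewrite !inE e_sym; case: (u \in S).
lia.
Qed.

Lemma deg_sum_in_predD1 S v :
  v \in S -> deg_sum_in S = deg_sum_in [predD1 S & v] + 2 * deg_in S v.
Proof.
move=> vS; rewrite -(deg_in_predD1 S v) -deg_sum_in_predU1 ?inE ?eqxx //.
by apply: eq_deg_sum_in => u; rewrite !inE; case: (u =P v) => [->|].
Qed.

Lemma sub_restrict S S' : {subset S' <= S} -> subrel (restrict e S') (restrict e S).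
Proof. by move=> sub x y /and3P [? /sub ? /sub ?]; apply/and3P. Qed.

Lemma acyclic_on_sub S S' : {subset S' <= S} -> acyclic_on e S -> acyclic_on e S'.
Proof.
move=> sub acyc x p; apply/negP => /and4P [px up sp lp]; have := acyc x p.
by rewrite /is_cycle up sp (sub_path (sub_restrict sub) px) (sub_restrict sub lp).
Qed.

Lemma connect_restrict_sub S S' x y :
  {subset S' <= S} -> connect (restrict e S') x y -> connect (restrict e S) x y.
Proof. by move=> sub; apply: connect_sub => a c ac; apply/connect1/(sub_restrict sub). Qed.

Lemma restrict_path_mem S x p : path (restrict e S) x p -> all (mem S) p.
Proof. by elim: p x => //= y p IH x /andP [/and3P [_ _ ->] /IH]. Qed.

Lemma restrict_path S x p : path (restrict e S) x p -> path e x p.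
Proof. by apply: sub_path => a c /and3P []. Qed.

Lemma path_restrict S x p :
  path e x p -> all (mem S) (x :: p) -> path (restrict e S) x p.
Proof.
elim: p x => //= y p IH x /andP [xy py] /and3P [xS yS pS].
by rewrite /restrict /= xy xS yS IH //= yS.
Qed.

Lemma restrictT : restrict e predT =2 e.
Proof. by move=> x y; rewrite /restrict /= andbT. Qed.

Lemma restrict_sym S : symmetric (restrict e S).
Proof. by move=> x y; rewrite /restrict /= e_sym [(x \in S) && _]andbC. Qed.

Lemma uniq_path_back_edge (r : rel T) x p c :
    path r x p -> uniq (x :: p) -> c \in x :: p -> r (last x p) c -> c != last x p ->
  (exists q, is_cycle r c q) \/ (exists p', p = rcons p' (last x p) /\ c = last x p').
Proof.
move=> px ux cx rc nc.
have [s1 [s2 def_xp]] : exists s1 s2, x :: p = s1 ++ c :: s2.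
  by case/splitPr: cx => s1 s2; exists s1, s2.
have [pc uc lastc pred_c] : [/\ path r c s2, uniq (c :: s2), last x p = last c s2 &
    forall y, s2 = [:: y] -> exists p', p = rcons p' y /\ c = last x p'].
  case: s1 def_xp => [|x' s1] /= [def_x def_p]; subst x p.
    by split=> // y ->; exists [::].
  move: px; rewrite cat_path /= => /and3P [_ _ ->]; split=> //.
  - by move: ux; rewrite -cat_cons cat_uniq /= => /and3P [_ _ /andP [-> ->]].
  - by rewrite last_cat.
  - by move=> y ->; exists (rcons s1 c); rewrite last_rcons -!cats1 -catA.
clear def_xp; case: s2 pc uc lastc pred_c => [|y [|y' s2]] pc uc lastc pred_c.
- by move: nc; rewrite lastc eqxx.
- by right; have [p' [def_p def_c]] := pred_c y erefl; exists p'; rewrite lastc.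
- by left; exists [:: y, y' & s2]; apply/and4P; split => //; rewrite -lastc.
Qed.

Lemma acyclic_on_leaf S x :
  acyclic_on e S -> x \in S -> exists2 v, v \in S & deg_in S v <= 1.
Proof.
move=> acyc xS.
suff grow k p y : #|T| - size p <= k -> path (restrict e S) y p -> uniq (y :: p) ->
    y \in S -> exists2 v, v \in S & deg_in S v <= 1.
  by apply: (grow #|T| [::] x); rewrite ?subn0.
elim: k p y => [|k IH] p y szp yp uyp yS.
  exfalso; move: szp (max_card (mem (y :: p))); rewrite (card_uniqP uyp) /=.
  set t := #|T|; lia.
have lastS : last y p \in S.
  by case/lastP: p yp {szp uyp} => // p z; rewrite last_rcons => /restrict_path_mem; rewrite all_rcons => /andP [].
case: (leqP (deg_in S (last y p)) 1) => [leaf | /card_gt1P [c1 [c2 [c1S c2S c12]]]].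
  by exists (last y p).
have extend c : c \in S -> e (last y p) c -> c \notin y :: p ->
    exists2 v, v \in S & deg_in S v <= 1.
  move=> cS ec cp; apply: (IH (rcons p c) y) => //.
  - by rewrite size_rcons; lia.
  - by rewrite rcons_path yp /restrict /= ec lastS cS.
  - by rewrite -rcons_cons rcons_uniq cp uyp.
move: c1S c2S; rewrite !inE => /andP [c1S ec1] /andP [c2S ec2].
have [c1p|] := boolP (c1 \in y :: p); last exact: extend.
have [c2p|] := boolP (c2 \in y :: p); last exact: extend.
have pred_of c : c \in S -> e (last y p) c -> c \in y :: p ->
    exists2 p', p = rcons p' (last y p) & c = last y p'.
  move=> cS ec cp; have rc : restrict e S (last y p) c by rewrite /restrict /= ec lastS cS.
  have nc : c != last y p by apply: contraTneq ec => ->; rewrite e_irr.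
  case: (uniq_path_back_edge yp uyp cp rc nc) => [[q cyc]|[p' [? ?]]].
    by have := acyc c q; rewrite cyc.
  by exists p'.
have [p1 def_p1 def_c1] := pred_of c1 c1S ec1 c1p.
have [p2 def_p2 def_c2] := pred_of c2 c2S ec2 c2p.
have [eq_p12] : (p1, last y p) = (p2, last y p).
  by apply: rcons_inj; rewrite -def_p1 -def_p2.
by move: c12; rewrite def_c1 def_c2 eq_p12 eqxx.
Qed.

Lemma deg_in_gt1_inner S x p v : path (restrict e S) x p -> uniq (x :: p) ->
  v \in p -> v != last x p -> 1 < deg_in S v.
Proof.
move=> pxp uxp vp; case/splitPr: vp pxp uxp => s1 s2.
case: s2 => [|h s2] pxp uxp; first by rewrite last_cat eqxx.
move=> _; move: pxp; rewrite cat_path /= => /and3P [_ /and3P [wv wS _] /andP [/and3P [vh _ hS] _]].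
have wh : last x s1 != h.
  move: uxp; rewrite -cat_cons cat_uniq => /and3P [_ /hasPn/(_ h) + _].
  rewrite !inE eqxx orbT => /(_ isT); apply: contra => /eqP <-.
  by have := mem_last x s1; rewrite inE.
by apply/card_gt1P; exists (last x s1), h; rewrite !inE wS hS vh -e_sym wv.
Qed.

Lemma connected_on_predD1 S v :
  deg_in S v <= 1 -> connected_on e S -> connected_on e [predD1 S & v].
Proof.
move=> leaf conS a c aS' cS'.
have sub : {subset [predD1 S & v] <= S} by move=> z /andP [].
case/connectP: (conS a c (sub a aS') (sub c cS')) => p0 p0a def_c.
move: cS'; rewrite def_c; case/shortenP: p0a => p pa up _ cS'.
apply/connectP; exists p => //; apply: path_restrict (restrict_path pa) _.
rewrite /= aS'; apply/allP => z zp; have zS : z \in S := allP (restrict_path_mem pa) z zp.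
rewrite !inE zS andbT.
apply: contraTneq leaf => zv; rewrite -ltnNge -zv (deg_in_gt1_inner pa up zp) //.
by apply: contraTneq cS' => <-; rewrite !inE zv eqxx.
Qed.

Lemma connected_on_add_leaf S v w : v \in S -> w \in S -> e v w ->
  connected_on e [predD1 S & v] -> connected_on e S.
Proof.
move=> vS wS vw conS' a c aS cS.
have sub : {subset [predD1 S & v] <= S} by move=> z /andP [].
have wS' : w \in [predD1 S & v].
  by rewrite !inE wS andbT; apply: contraTneq vw => ->; rewrite e_irr.
have to_w z : z \in S -> connect (restrict e S) z w.
  have [-> _|zv zS] := eqVneq z v; first by apply: connect1; rewrite /restrict /= vw vS wS.
  by apply: (connect_restrict_sub sub); apply: conS' => //; rewrite !inE zv.
apply: connect_trans (to_w a aS) _.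
by rewrite (sym_connect_sym (restrict_sym S)); apply: to_w.
Qed.

Lemma connected_on_deg_in_gt0 S u v :
  connected_on e S -> u \in S -> v \in S -> u != v -> 0 < deg_in S v.
Proof.
move=> conS uS vS uv; case/connectP: (conS v u vS uS) => [[|h p]] /=.
  by move=> _ vu; rewrite vu eqxx in uv.
by case/andP=> /and3P [vh _ hS] _ _; apply/card_gt0P; exists h; rewrite !inE hS vh.
Qed.

Lemma acyclic_deg_sum_in S : acyclic_on e S -> (exists x, x \in S) ->
  deg_sum_in S + 2 <= 2 * #|S| /\ (deg_sum_in S + 2 = 2 * #|S| <-> connected_on e S).
Proof.
move: {2}#|S| (erefl #|S|) => k; elim: k S => [|k IH] S cardS acyc [x xS].
  by move: (card0_eq cardS x); rewrite xS.
have [v vS leaf] := acyclic_on_leaf acyc xS.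
pose S' : {pred T} := [predD1 S & v].
have sub : {subset S' <= S} by move=> z /andP [].
have sumS : deg_sum_in S = deg_sum_in S' + 2 * deg_in S v := deg_sum_in_predD1 vS.
have cardS' : #|S| = #|S'|.+1 by rewrite (cardD1 v) vS.
have [u uS' | S'0] := pickP (mem S').
  have [|le' eq'] := IH S' _ (acyclic_on_sub sub acyc) (ex_intro _ u uS'); first lia.
  have /andP [uv uS] := uS'.
  split; first lia.
  split=> [tight | conS].
    have [w] : exists w, w \in [pred w | (w \in S) && e v w].
      by apply/card_gt0P; rewrite -/(deg_in S v); lia.
    rewrite !inE => /andP [wS vw]; apply: connected_on_add_leaf vS wS vw _.
    by apply/eq'; lia.
  have := connected_on_deg_in_gt0 conS uS vS uv.
  by have := eq'.2 (connected_on_predD1 leaf conS); lia.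
have onlyv z : z \in S -> z = v.
  by move=> zS; apply/eqP; move: (S'0 z); rewrite !inE zS andbT => /negbT; rewrite negbK.
have degv : deg_in S v = 0.
  by apply: eq_card0 => z; rewrite !inE; apply/andP => [[/onlyv -> ]]; rewrite e_irr.
have sum' : deg_sum_in S' = 0 by rewrite /deg_sum_in big_pred0.
have card' : #|S'| = 0 by apply: eq_card0.
split; first lia.
split=> _; last lia.
by move=> a c /onlyv -> /onlyv ->; apply: connect0.
Qed.

End InducedSubgraph.

Section Tree.
Variables (T : finType) (e : rel T).
Hypotheses (e_sym : symmetric e) (e_irr : irreflexive e).
Hypotheses (e_conn : connected_on e predT) (e_acyc : acyclic_on e predT).
Implicit Types (S : {pred T}) (u v w x y : T).

Lemma deg_in_predT v : deg_in e predT v = deg e v.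
Proof. by apply: eq_card => u; rewrite !inE. Qed.

Lemma tree_connect x y : connect e x y.
Proof. by rewrite -(eq_connect (restrictT e)); apply: e_conn. Qed.

Lemma tree_not_cycle x p : ~~ is_cycle e x p.
Proof.
by have := e_acyc x p; rewrite /is_cycle (eq_path (restrictT e)) restrictT.
Qed.

Lemma handshake_tree : 0 < #|T| -> \sum_u deg e u + 2 = 2 * #|T|.
Proof.
case/card_gt0P=> x _.
have [_ tight] := acyclic_deg_sum_in e_sym e_irr e_acyc (ex_intro _ x isT).
rewrite -(proj2 tight e_conn) /deg_sum_in.
by apply/eqP; rewrite eqn_add2r; apply/eqP/eq_bigr => u _; rewrite deg_in_predT.
Qed.

Lemma nbr_mem_of_deg x s y :
  deg e x = size s -> uniq s -> all (e x) s -> e x y -> y \in s.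
Proof.
move=> degx us nbrs xy.
have sub : mem s \subset [pred z | e x z] by apply/subsetP => z zs; rewrite inE (allP nbrs).
have /subset_cardP/(_ sub)/(_ y) : #|mem s| = #|[pred z | e x z]| by rewrite (card_uniqP us).
by rewrite !inE xy => ->.
Qed.

Lemma tree_nbr_closed (L : seq T) x y :
  (forall a c, a \in L -> e a c -> c \in L) -> x \in L -> y \in L.
Proof.
move=> closedL xL; case/connectP: (tree_connect x y) => p + ->.
elim: p x xL => //= z p IH x xL /andP [xz zp].
exact: IH (closedL x z xL xz) zp.
Qed.

Lemma tree_deg_gt0 u : 1 < #|T| -> 0 < deg e u.
Proof.
move=> T2; have [v] : exists v, v \in predC1 u by apply/card_gt0P; rewrite cardC1; lia.
rewrite !inE => vu; case/connectP: (tree_connect u v) => [[|h p]] /=.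
  by move=> _ uv; rewrite uv eqxx in vu.
by case/andP=> uh _ _; apply/card_gt0P; exists h.
Qed.

Lemma tree_no_adjacent_leaves u v :
  2 < #|T| -> e u v -> deg e u = 1 -> deg e v = 1 -> False.
Proof.
move=> T3 uv degu degv.
have u_v : u != v by apply: contraTneq uv => ->; rewrite e_irr.
have closed a c : a \in [:: u; v] -> e a c -> c \in [:: u; v].
  rewrite !inE => /orP [] /eqP -> ac.
    have : c \in [:: v] by apply: (@nbr_mem_of_deg u) => //=; rewrite uv.
    by rewrite !inE => ->; rewrite orbT.
  have : c \in [:: u] by apply: (@nbr_mem_of_deg v) => //=; rewrite e_sym uv.
  by rewrite !inE => ->.
have all_uv z : z \in [:: u; v] by apply: (@tree_nbr_closed _ u z closed); rewrite inE eqxx.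
have : #|T| <= #|mem [:: u; v]| by apply/subset_leq_card/subsetP => z _; apply: all_uv.
by rewrite (card_uniqP _) /= ?inE ?u_v // => /(leq_trans T3).
Qed.

Lemma deg_in_le1_of_tree_count S w :
  deg_sum_in e S + 2 = 2 * #|S| -> w \notin S -> deg_in e S w <= 1.
Proof.
move=> countS wS; pose S1 : {pred T} := [predU1 w & S].
have [le1 _] := acyclic_deg_sum_in e_sym e_irr (acyclic_on_sub (S' := S1) (fun _ _ => isT) e_acyc)
  (ex_intro _ w (predU1l _ (erefl w))).
have sum1 : deg_sum_in e S1 = deg_sum_in e S + 2 * deg_in e S w := deg_sum_in_predU1 e_sym e_irr wS.
have card1 : #|S1| = #|S|.+1 by rewrite cardU1 wS.
lia.
Qed.

(* Each outside vertex of the path has at most one neighbour in the set grown so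
   far, so adding them one by one keeps the edge count tight; the last one has two. *)
Lemma no_detour_of_tree_count S x y q :
    deg_sum_in e S + 2 = 2 * #|S| -> x \in S -> y \in S ->
    path e x (rcons q y) -> uniq (x :: rcons q y) -> all [predC S] q ->
  q = [::].
Proof.
elim: q S x => // w q IH S x countS xS yS /= /andP [xw wq] /andP [xwq uwq] /andP [wS qS].
have lew := deg_in_le1_of_tree_count countS wS.
have gtw : 0 < deg_in e S w by apply/card_gt0P; exists x; rewrite !inE xS e_sym.
exfalso; case: q IH wq xwq uwq qS => [|w' q] IH wq xwq uwq qS.
  have xy : x != y by move: xwq; rewrite !inE negb_or => /andP [_ ->].
  move: wq => /= /andP [wy _]; move: lew; rewrite leqNgt => /negP; apply.
  by apply/card_gt1P; exists x, y; rewrite !inE xS yS wy e_sym xw.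
pose S1 : {pred T} := [predU1 w & S].
have count1 : deg_sum_in e S1 + 2 = 2 * #|S1|.
  have := deg_sum_in_predU1 e_sym e_irr wS; have := cardU1 w S; rewrite wS.
  by rewrite -/S1 => -> ->; lia.
suff : w' :: q = [::] by [].
apply: (IH S1 w) => //; first by rewrite !inE eqxx.
  by rewrite !inE yS orbT.
apply/allP => z zq; have zS : z \notin S by have := allP qS z zq; rewrite inE.
rewrite !inE negb_or zS andbT.
by apply: contraTneq uwq => zw; rewrite /= -zw -rcons_cons mem_rcons inE zq orbT.
Qed.

Lemma rev_path_rcons x p y : path e x (rcons p y) -> uniq (x :: rcons p y) ->
  path e y (rcons (rev p) x) /\ uniq (y :: rcons (rev p) x).
Proof.
move=> pxy uxy; split; last by rewrite -rev_cons -rev_rcons rev_uniq.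
have := rev_path e x (rcons p y); rewrite last_rcons belast_rcons rev_cons => ->.
by rewrite (eq_path (e' := e)) // => a c; rewrite /= e_sym.
Qed.

Lemma extend_deg2_path x p : path e x p -> uniq (x :: p) -> p != [::] ->
    all (fun z => deg e z == 2) p ->
  exists q y, [/\ path e x (p ++ rcons q y), uniq (x :: p ++ rcons q y),
                  all (fun z => deg e z == 2) q & deg e y != 2].
Proof.
move: {2}(#|T| - size p) (leqnn (#|T| - size p)) => k; elim: k p => [|k IH] p szp xp uxp.
  by exfalso; move: szp (max_card (mem (x :: p))); rewrite (card_uniqP uxp) /=; set t := #|T|; lia.
case/lastP: p szp xp uxp => // p y0 szp xp uxp _; rewrite all_rcons => /andP [/eqP degy0 deg2p].
move: (xp); rewrite rcons_path => /andP [_ zy0]; set z := last x p in zy0.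
have [c] : exists c, c \in [predD1 [pred u | e y0 u] & z].
  apply/card_gt0P; have := cardD1 z [pred u | e y0 u]; rewrite -/(deg e y0) degy0 !inE e_sym zy0.
  by set t := #|_|; lia.
rewrite !inE => /andP [cz y0c].
have cx : c \notin x :: rcons p y0.
  apply/negP => cx; have nc : c != last x (rcons p y0).
    by rewrite last_rcons; apply: contraTneq y0c => ->; rewrite e_irr.
  have rc : e (last x (rcons p y0)) c by rewrite last_rcons.
  case: (uniq_path_back_edge xp uxp cx rc nc) => [[q cyc]|[p2 [def_p2 def_c]]].
    by have := tree_not_cycle c q; rewrite cyc.
  move: def_p2; rewrite last_rcons => /rcons_inj [def_p]; subst p2.
  by rewrite def_c eqxx in cz.
have xpc : path e x (rcons (rcons p y0) c) by rewrite rcons_path xp last_rcons y0c.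
have uxpc : uniq (x :: rcons (rcons p y0) c) by rewrite -rcons_cons rcons_uniq cx uxp.
have [degc | degc] := eqVneq (deg e c) 2; last first.
  by exists [::], c; rewrite cats1.
have szpc : #|T| - size (rcons (rcons p y0) c) <= k.
  by rewrite !size_rcons; move: szp; rewrite size_rcons; set t := #|T|; lia.
have nepc : rcons (rcons p y0) c != [::] by rewrite -size_eq0 size_rcons.
have deg2pc : all (fun z => deg e z == 2) (rcons (rcons p y0) c).
  by rewrite !all_rcons degc degy0 deg2p.
have [q [y [? ? ? ?]]] := IH _ szpc xpc uxpc nepc deg2pc.
by exists (c :: q), y; rewrite -cat_rcons /= degc.
Qed.

Lemma leaf_path_nbr_closed x p y :
    path e x (rcons p y) -> uniq (x :: rcons p y) ->
    deg e x = 1 -> deg e y = 1 -> all (fun z => deg e z == 2) p ->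
  forall a c, a \in x :: rcons p y -> e a c -> c \in x :: rcons p y.
Proof.
move=> pxy uxy degx degy deg2p a c ap ac.
have [s1 [s2 def_xp]] : exists s1 s2, x :: rcons p y = s1 ++ a :: s2.
  by case/splitPr: ap => s1 s2; exists s1, s2.
case: s1 def_xp => [|x' s1] /= [def_x def_p].
  subst a; case def_p' : (rcons p y) pxy => [|h t] /=; first by case: (p) def_p'.
  case/andP=> xh _; have : c \in [:: h] by apply: (@nbr_mem_of_deg x) => //=; rewrite xh.
  by rewrite !inE => /eqP ->; rewrite eqxx orbT.
subst x'; set w := last x s1.
have wp : w \in x :: rcons p y by rewrite def_p -cat_cons mem_cat mem_last.
have /and3P [_ wa pa] : [&& path e x s1, e (last x s1) a & path e a s2].
  by move: pxy; rewrite def_p cat_path.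
case: s2 def_p pa => [|h s2] def_p pa.
  move: def_p; rewrite cats1 => /rcons_inj [-> def_a]; subst a.
  have : c \in [:: w] by apply: (@nbr_mem_of_deg y) => //=; rewrite e_sym wa.
  by rewrite inE => /eqP ->; rewrite -rcons_cons mem_rcons inE mem_last orbT.
move: pa => /= /andP [ah _].
have /and3P [_ disj ua] : [&& uniq (x :: s1), ~~ has (mem (x :: s1)) [:: a, h & s2]
    & uniq [:: a, h & s2]] by move: uxy; rewrite def_p -cat_cons cat_uniq.
have def_y : y = last h s2 by have := congr1 (last x) def_p; rewrite last_rcons last_cat.
have ay : a != y by apply: contraTneq ua => ->; rewrite /= {1}def_y mem_last.
have dega : deg e a = 2.
  have : a \in rcons p y by rewrite def_p mem_cat inE eqxx orbT.
  by rewrite mem_rcons inE (negbTE ay) => /(allP deg2p)/eqP.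
have wh : w != h.
  apply: contraTneq disj => <-; rewrite negbK; apply/hasP; exists w; first by rewrite !inE eqxx orbT.
  exact: mem_last.
have : c \in [:: w; h] by apply: (@nbr_mem_of_deg a) => //=; rewrite ?inE ?wh // e_sym wa ah.
rewrite !inE => /orP [/eqP -> // | /eqP ->].
by rewrite def_p mem_cat !inE eqxx !orbT.
Qed.

Lemma adjacent_deg2_long_path w1 w2 z : 1 < #|T| ->
    e w1 w2 -> deg e w1 = 2 -> deg e w2 = 2 -> branching e z ->
  (exists x p, internal_path e x p /\ 1 < size p) \/
  (exists x p, pendent_path e x p /\ 2 < size p).
Proof.
move=> T2 w12 degw1 degw2 brz.
have leaf_or_branching v : deg e v != 2 -> pendent e v \/ branching e v.
  by have := @tree_deg_gt0 v T2; rewrite /pendent /branching; lia.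
have w1_w2 : w1 != w2 by apply: contraTneq w12 => ->; rewrite e_irr.
have [q1 [y2 [pq1 uq1 degq1 degy2]]] : exists q y, [/\ path e w1 ([:: w2] ++ rcons q y),
    uniq (w1 :: [:: w2] ++ rcons q y), all (fun z => deg e z == 2) q & deg e y != 2].
  by apply: extend_deg2_path; rewrite /= ?w12 ?degw2 ?inE ?w1_w2.
have [rp1 ru1] := @rev_path_rcons w1 (w2 :: q1) y2 pq1 uq1.
set p := rcons (rev (w2 :: q1)) w1 in rp1 ru1.
have deg2p : all (fun z => deg e z == 2) p by rewrite /p all_rcons all_rev /= degw1 degw2 degq1.
have nep : p != [::] by rewrite -size_eq0 /p size_rcons.
have [q2 [y1 [pq2 uq2 degq2 degy1]]] := extend_deg2_path rp1 ru1 nep deg2p.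
set P := p ++ q2; have pP : path e y2 (rcons P y1) by rewrite /P rcons_cat.
have uP : uniq (y2 :: rcons P y1) by rewrite /P rcons_cat.
have deg2P : all (fun z => deg e z == 2) P by rewrite /P all_cat deg2p degq2.
have szP : 1 < size P by rewrite /P size_cat /p size_rcons size_rev /= addSn ltnS leq_addr.
have [rpP ruP] := rev_path_rcons pP uP.
case: (leaf_or_branching y2 degy2) => [leaf2|br2];
  case: (leaf_or_branching y1 degy1) => [leaf1|br1].
- have closed := leaf_path_nbr_closed pP uP (eqP leaf2) (eqP leaf1) deg2P.
  have := @tree_nbr_closed _ y2 z closed (mem_head _ _); rewrite inE mem_rcons inE.
  case/or3P=> [/eqP def_z|/eqP def_z|zP].
  + by move: brz; rewrite def_z /branching (eqP leaf2).
  + by move: brz; rewrite def_z /branching (eqP leaf1).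
  + by move: brz; rewrite /branching (eqP (allP deg2P z zP)).
- right; exists y2, (rcons P y1); rewrite size_rcons; split; last by [].
  by apply/and5P; rewrite /gpath pP uP size_rcons leaf2 last_rcons br1 /inner belast_rcons deg2P.
- right; exists y1, (rcons (rev P) y2); rewrite size_rcons size_rev; split; last by [].
  apply/and5P; rewrite /gpath rpP ruP size_rcons leaf1 last_rcons br2 /inner belast_rcons.
  by rewrite all_rev deg2P.
- left; exists y2, (rcons P y1); rewrite size_rcons; split; last exact: ltnW.
  by apply/and5P; rewrite /gpath pP uP size_rcons br2 last_rcons br1 /inner belast_rcons deg2P.
Qed.

End Tree.

Lemma sum_sym_pairs (T : finType) (F : T -> T -> nat) :
    (forall u v, F u v = F v u) -> (forall u, F u u = 0) ->
  \sum_u \sum_v F u v = 2 * \sum_u \sum_(v | enum_rank u < enum_rank v) F u v.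
Proof.
move=> Fsym Fdiag; pose G u v := (enum_rank u < enum_rank v) * F u v.
have splitF u v : F u v = G u v + G v u.
  rewrite /G [F v u]Fsym; case: ltngtP => [_|_|eq_uv]; rewrite ?mul1n ?mul0n ?addn0 //.
  by rewrite (enum_rank_inj (val_inj eq_uv)) Fdiag.
under eq_bigr => u _ do under eq_bigr => v _ do rewrite splitF.
under eq_bigr => u _ do rewrite big_split.
rewrite big_split /= [X in _ + X]exchange_big /= addnn -mul2n; congr (2 * _).
apply: eq_bigr => u _; rewrite [RHS]big_mkcond; apply: eq_bigr => v _.
by rewrite /G; case: (_ < _); rewrite ?mul1n.
Qed.

Section DegreeCounts.
Variables (T : finType) (e : rel T).
Hypotheses (e_sym : symmetric e) (e_irr : irreflexive e).
Hypothesis deg_range : forall v, 0 < deg e v <= 4.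

Definition ecount i j : nat := \sum_u \sum_v [&& e u v, deg e u == i & deg e v == j].

Lemma ndegE i : ndeg e i = \sum_u (deg e u == i).
Proof. by rewrite /ndeg -sum1_card big_mkcond. Qed.

Lemma deg_indicator_sum (F : nat -> nat) u :
  \sum_(1 <= i < 5) (deg e u == i) * F i = F (deg e u).
Proof.
rewrite (eq_bigr (fun i => if i == deg e u then F i else 0)) => [|i _]; last first.
  by rewrite eq_sym; case: eqP; rewrite ?mul1n.
by rewrite -big_mkcond big_nat1_eq ifT //; apply: deg_range.
Qed.

Lemma sum_by_deg (F : nat -> nat) : \sum_u F (deg e u) = \sum_(1 <= i < 5) F i * ndeg e i.
Proof.
under [RHS]eq_bigr => i _ do rewrite ndegE big_distrr.
rewrite exchange_big; apply: eq_bigr => u _ /=.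
by rewrite -deg_indicator_sum; apply: eq_bigr => i _; rewrite mulnC.
Qed.

Lemma sum_by_edge_deg (G : nat -> nat -> nat) :
  \sum_u \sum_v e u v * G (deg e u) (deg e v) =
  \sum_(1 <= i < 5) \sum_(1 <= j < 5) G i j * ecount i j.
Proof.
have termE u v : e u v * G (deg e u) (deg e v) =
    \sum_(1 <= i < 5) \sum_(1 <= j < 5) G i j * [&& e u v, deg e u == i & deg e v == j].
  rewrite -(deg_indicator_sum (G^~ (deg e v))) big_distrr; apply: eq_bigr => i _ /=.
  rewrite -(deg_indicator_sum (G i) v) !big_distrr; apply: eq_bigr => j _ /=.
  by case: (e u v); case: (deg e u == i); case: (deg e v == j); rewrite /= ?mul1n ?mul0n ?muln0 ?muln1.
under eq_bigr => u _ do under eq_bigr => v _ do rewrite termE.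
under eq_bigr => u _ do rewrite exchange_big.
rewrite exchange_big; apply: eq_bigr => i _.
under eq_bigr => u _ do rewrite exchange_big.
rewrite exchange_big; apply: eq_bigr => j _.
by rewrite /ecount big_distrr; apply: eq_bigr => u _; rewrite big_distrr.
Qed.

Lemma ecount_sym i j : ecount i j = ecount j i.
Proof.
rewrite /ecount exchange_big; apply: eq_bigr => u _; apply: eq_bigr => v _.
by rewrite e_sym [(deg e v == i) && _]andbC.
Qed.

Lemma ecount_gt0P i j :
  reflect (exists u v, [/\ e u v, deg e u = i & deg e v = j]) (0 < ecount i j).
Proof.
apply: (iffP idP) => [|[u [v [uv <- <-]]]]; last first.
  by rewrite /ecount (bigD1 u) //= (bigD1 v) //= uv !eqxx add1n addSn.
rewrite lt0n sum_nat_eq0 negb_forall => /existsP [u]; rewrite sum_nat_eq0 negb_forall.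
by case/existsP=> v; rewrite eqb0 negbK => /and3P [uv /eqP du /eqP dv]; exists u, v.
Qed.

Lemma ecount_gt0 u v : e u v -> 0 < ecount (deg e u) (deg e v).
Proof. by move=> uv; apply/ecount_gt0P; exists u, v. Qed.

Lemma sum_ecount_row k :
  \sum_(1 <= i < 5) \sum_(1 <= j < 5) (i == k) * ecount i j = k * ndeg e k.
Proof.
rewrite -(sum_by_edge_deg (fun i _ => i == k)) ndegE big_distrr; apply: eq_bigr => u _ /=.
rewrite -big_distrl /=.
have -> : \sum_v (e u v : nat) = deg e u.
  by rewrite /deg -sum1_card [RHS]big_mkcond; apply: eq_bigr => v _; rewrite inE.
by case: eqP => [->|]; rewrite ?muln0.
Qed.

Lemma M2_ecount : 2 * M2 e = \sum_(1 <= i < 5) \sum_(1 <= j < 5) i * j * ecount i j.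
Proof.
rewrite -(sum_by_edge_deg muln) (sum_sym_pairs (F := fun u v => e u v * (deg e u * deg e v))).
- congr (2 * _); apply: eq_bigr => u _; rewrite big_mkcondr; apply: eq_bigr => v _.
  by case: (e u v); rewrite ?mul1n ?mul0n.
- by move=> u v; rewrite e_sym [deg e u * _]mulnC.
- by move=> u; rewrite e_irr.
Qed.

Lemma deg_sum_in_ecount (P : pred nat) :
  deg_sum_in e [pred v | P (deg e v)] =
  \sum_(1 <= i < 5) \sum_(1 <= j < 5) P i * P j * ecount i j.
Proof.
rewrite -(sum_by_edge_deg (fun i j => P i * P j)) /deg_sum_in big_mkcond /=.
apply: eq_bigr => u _; rewrite /deg_in -sum1_card big_mkcond /= inE.
case: (P (deg e u)); last by rewrite big1 // => v _; rewrite mul0n muln0.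
by apply: eq_bigr => v _; rewrite !inE; case: (P (deg e v)); case: (e u v).
Qed.

End DegreeCounts.

(* m_ij counts ordered pairs of adjacent vertices of degrees i and j; m_11 = 0 and
   the symmetric counts m_ji = m_ij are already eliminated. *)
Record tree_profile (n b M N1 N2 N3 N4 m12 m13 m14 m22 m23 m24 m33 m34 m44 : nat) : Prop :=
  TreeProfile {
    vertex_count : n = N1 + N2 + N3 + N4;
    handshake : N1 + 2 * N2 + 3 * N3 + 4 * N4 + 2 = 2 * n;
    branching_count : b = N3 + N4;
    deg1_edges : m12 + m13 + m14 = N1;
    deg2_edges : m12 + m22 + m23 + m24 = 2 * N2;
    deg3_edges : m13 + m23 + m33 + m34 = 3 * N3;
    deg4_edges : m14 + m24 + m34 + m44 = 4 * N4;
    zagreb : 2 * M = 4 * m12 + 6 * m13 + 8 * m14 + 4 * m22 + 12 * m23 + 16 * m24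
                     + 9 * m33 + 24 * m34 + 16 * m44;
    branching_forest : m33 + 2 * m34 + m44 + 2 <= 2 * b;
    deg4_forest : N4 = 0 \/ m44 + 2 <= 2 * N4 }.

Section ProfileBounds.
Variables (n b M N1 N2 N3 N4 m12 m13 m14 m22 m23 m24 m33 m34 m44 : nat).
Hypothesis prof : tree_profile n b M N1 N2 N3 N4 m12 m13 m14 m22 m23 m24 m33 m34 m44.

Lemma profile_regime1 : 5 * b + 4 <= n ->
  ((M%:Z <= 4 * n%:Z + 16 * b%:Z - 12)%R
   /\ ((M%:Z = 4 * n%:Z + 16 * b%:Z - 12 :> int)%R <->
       [/\ N4 = b, N2 = n - 3 * b - 2, N1 = 2 * b + 2, m44 + 2 = 2 * N4
         & m14 = 0 \/ m22 = 0])).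
Proof. by case: prof => *; split; [lia | split; [move=> ?; split; lia | case=> *; lia]]. Qed.

Lemma profile_regime2 : n < 5 * b + 4 -> 3 * b + 2 < n ->
  ((M%:Z <= 6 * n%:Z + 6 * b%:Z - 20)%R
   /\ ((M%:Z = 6 * n%:Z + 6 * b%:Z - 20 :> int)%R <->
       [/\ N4 = b, N2 = n - 3 * b - 2, N1 = 2 * b + 2, m44 + 2 = 2 * N4
         & m14 = 0 \/ m22 = 0])).
Proof. by case: prof => *; split; [lia | split; [move=> ?; split; lia | case=> *; lia]]. Qed.

Lemma profile_regime3 : 2 * b + 2 < n -> n <= 3 * b + 2 -> 7 * b + 4 < 3 * n ->
  ((M%:Z <= 10 * n%:Z - 6 * b%:Z - 28)%R
   /\ ((M%:Z = 10 * n%:Z - 6 * b%:Z - 28 :> int)%R <->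
       [/\ N4 = n - 2 * b - 2, N3 = 3 * b + 2 - n, N1 = n - b, m44 + 2 = 2 * N4
         & m14 = 0 \/ m33 = 0])).
Proof. by case: prof => *; split; [lia | split; [move=> ?; split; lia | case=> *; lia]]. Qed.

Lemma profile_regime4 : 2 * b + 2 < n -> 3 * n <= 7 * b + 4 ->
  ((M%:Z <= 16 * n%:Z - 20 * b%:Z - 36)%R
   /\ ((M%:Z = 16 * n%:Z - 20 * b%:Z - 36 :> int)%R <->
       [/\ N4 = n - 2 * b - 2, N3 = 3 * b + 2 - n, N1 = n - b, m44 + 2 = 2 * N4
         & m14 = 0 \/ m33 = 0])).
Proof. by case: prof => *; split; [lia | split; [move=> ?; split; lia | case=> *; lia]]. Qed.

End ProfileBounds.

Section BranchPaths.
Variables (T : finType) (e : rel T).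

Lemma inner_rcons (x : T) q y : inner x (rcons q y) = q.
Proof. by rewrite /inner belast_rcons. Qed.

Lemma size_inner (x : T) p : 0 < size p -> size p = (size (inner x p)).+1.
Proof. by case/lastP: p => // q y _; rewrite inner_rcons size_rcons. Qed.

Lemma inner_nil_of_no_deg2 (x : T) p : (forall v, deg e v != 2) ->
  all (fun w => deg e w == 2) (inner x p) -> inner x p = [::].
Proof. by move=> no2; case: (inner x p) => //= w q /andP [/eqP w2]; have := no2 w; rewrite w2. Qed.

Lemma pendent_path_deg2_edge (x : T) p : pendent_path e x p -> 2 < size p ->
  exists u v, [/\ e u v, deg e u = 2 & deg e v = 2].
Proof.
case/and5P=> /andP [px _] _ _ _; case/lastP: p px => // q y.
rewrite inner_rcons size_rcons; case: q => [|u [|v q]] //= /and3P [_ uv _] /and3P [/eqP du /eqP dv _] _.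
by exists u, v.
Qed.

End BranchPaths.

Lemma sum_deg_range (F : nat -> nat) : \sum_(1 <= i < 5) F i = F 1 + F 2 + F 3 + F 4.
Proof. by rewrite unlock /= addn0 !addnA. Qed.

Section ChemicalTree.
Variables (n b : nat) (e : rel 'I_n).
Hypotheses (b_gt0 : 0 < b) (n_gt : 2 * b + 2 < n) (e_ct : CTstar n b e).

Local Notation N := (ndeg e).
Local Notation m := (ecount e).
Local Notation F := [pred v | deg e v == 4].

Lemma ct_tree : [/\ symmetric e, irreflexive e, connected_on e predT & acyclic_on e predT].
Proof. by case: e_ct => [[[? ?] [[? ?] _]] _]. Qed.

Lemma ct_card : 2 < #|'I_n|.
Proof. by rewrite card_ord; lia. Qed.

Lemma ct_deg_range v : 0 < deg e v <= 4.
Proof.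
have [_ _ e_conn _] := ct_tree; case: e_ct => [[_ [_ ->]] _].
by rewrite (tree_deg_gt0 e_conn) // ltnW // ct_card.
Qed.

Lemma ct_exists_branching : exists z, branching e z.
Proof.
have [_ card_b] := e_ct; have /card_gt0P [z] : 0 < #|[pred v | branching e v]| by rewrite card_b.
by exists z.
Qed.

Lemma ecount11_eq0 : m 1 1 = 0.
Proof.
have [e_sym e_irr e_conn _] := ct_tree.
apply/eqP; rewrite -leqn0 leqNgt; apply/(ecount_gt0P _ _ _)=> [[u [v [uv du dv]]]].
exact: (tree_no_adjacent_leaves e_sym e_irr e_conn ct_card uv du dv).
Qed.

Lemma deg_sum_in_branching :
  deg_sum_in e [pred v | branching e v] = m 3 3 + 2 * m 3 4 + m 4 4.
Proof.
have [e_sym _ _ _] := ct_tree; have := ecount_sym e_sym 3 4.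
by rewrite (deg_sum_in_ecount ct_deg_range (fun d => 2 < d)) !sum_deg_range /=; lia.
Qed.

Lemma deg_sum_in_deg4 : deg_sum_in e F = m 4 4.
Proof. by rewrite (deg_sum_in_ecount ct_deg_range (fun d => d == 4)) !sum_deg_range /=; lia. Qed.

Lemma ct_profile : tree_profile n b (M2 e) (N 1) (N 2) (N 3) (N 4)
  (m 1 2) (m 1 3) (m 1 4) (m 2 2) (m 2 3) (m 2 4) (m 3 3) (m 3 4) (m 4 4).
Proof.
have [e_sym e_irr e_conn e_acyc] := ct_tree; have [_ card_b] := e_ct.
have acyc S : acyclic_on e S := acyclic_on_sub (fun _ _ => isT) e_acyc.
have vertices : n = \sum_(1 <= i < 5) 1 * N i.
  by rewrite -(sum_by_deg ct_deg_range (fun _ => 1)) sum1_card card_ord.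
have degrees : \sum_(1 <= i < 5) i * N i + 2 = 2 * n.
  rewrite -(sum_by_deg ct_deg_range id) -[n in 2 * n]card_ord.
  by apply: handshake_tree => //; rewrite card_ord; lia.
have branchings : b = \sum_(1 <= i < 5) (2 < i) * N i.
  by rewrite -card_b -sum1_card -(sum_by_deg ct_deg_range (fun d => 2 < d)) big_mkcond.
have B_forest : m 3 3 + 2 * m 3 4 + m 4 4 + 2 <= 2 * b.
  have [z brz] := ct_exists_branching; rewrite -deg_sum_in_branching -card_b.
  exact: (acyclic_deg_sum_in e_sym e_irr (acyc _) (ex_intro _ z brz)).1.
have F_forest : N 4 = 0 \/ m 4 4 + 2 <= 2 * N 4.
  have [|/card_gt0P [v v4]] := posnP (N 4); [by left | right; rewrite -deg_sum_in_deg4].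
  exact: (acyclic_deg_sum_in e_sym e_irr (acyc _) (ex_intro _ v v4)).1.
have := M2_ecount e_sym e_irr ct_deg_range; have := ecount11_eq0.
have := ecount_sym e_sym 1 2; have := ecount_sym e_sym 1 3; have := ecount_sym e_sym 1 4.
have := ecount_sym e_sym 2 3; have := ecount_sym e_sym 2 4; have := ecount_sym e_sym 3 4.
have row k := sum_ecount_row ct_deg_range k.
have := row 1; have := row 2; have := row 3; have := row 4.
rewrite !sum_deg_range /= in vertices degrees branchings * => *.
by constructor; lia.
Qed.

Lemma deg4_tree_iff :
  ((exists v, deg e v == 4) /\ is_tree_on e F) <-> (0 < N 4 /\ m 4 4 + 2 = 2 * N 4).
Proof.
have [e_sym e_irr _ e_acyc] := ct_tree.
have F_acyc : acyclic_on e F := acyclic_on_sub (fun _ _ => isT) e_acyc.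
split=> [[[v v4] [F_conn _]] | [/card_gt0P [v v4] count4]].
  have [_ F_tree] := acyclic_deg_sum_in e_sym e_irr F_acyc (ex_intro _ v v4).
  by rewrite -deg_sum_in_deg4; split; [apply/card_gt0P; exists v | apply/F_tree].
have [_ F_tree] := acyclic_deg_sum_in e_sym e_irr F_acyc (ex_intro _ v v4).
by split; [exists v | split=> //; apply/F_tree; rewrite deg_sum_in_deg4].
Qed.

Lemma deg4_no_detour x q y : m 4 4 + 2 = 2 * N 4 -> deg e x = 4 -> deg e y = 4 ->
  path e x (rcons q y) -> uniq (x :: rcons q y) -> all (fun w => deg e w != 4) q -> q = [::].
Proof.
have [e_sym e_irr _ e_acyc] := ct_tree.
move=> count4 dx dy; apply: (no_detour_of_tree_count e_sym e_irr e_acyc (S := F)).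
- by rewrite deg_sum_in_deg4.
- by rewrite inE dx.
- by rewrite inE dy.
Qed.

Lemma internal_path_deg4_short : m 4 4 + 2 = 2 * N 4 ->
    (forall v, branching e v -> deg e v = 4) ->
  forall x p, internal_path e x p -> size p = 1.
Proof.
move=> count4 br4 x p /and5P [/andP [px ux] sz bx bl inner2].
case/lastP: p px ux sz bl inner2 => // q y; rewrite last_rcons inner_rcons size_rcons.
move=> px ux _ bry inner2; suff -> : q = [::] by [].
apply: deg4_no_detour count4 (br4 _ bx) (br4 _ bry) px ux _.
by apply: sub_all inner2 => w /eqP ->.
Qed.

Lemma deg_neq_of_ndeg0 k v : N k = 0 -> deg e v != k.
Proof. by move/card0_eq/(_ v); rewrite inE => ->. Qed.

Lemma prime_conditions_BT1 : BT1 n b e ->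
  prime_conditions e <-> m 4 4 + 2 = 2 * N 4 /\ (m 1 4 = 0 \/ m 2 2 = 0).
Proof.
have [e_sym e_irr e_conn e_acyc] := ct_tree.
case=> _ N4_b _ _; have N3_0 : N 3 = 0 by case: ct_profile; lia.
have br4 v : branching e v -> deg e v = 4.
  by have := deg_neq_of_ndeg0 v N3_0; have := ct_deg_range v; rewrite /branching; lia.
split=> [[int1 _ pend2 _ F_tree] | [count4 x14_x22]].
  have [_ count4] := deg4_tree_iff.1 F_tree; split=> //.
  have [->|/ecount_gt0P [u [v [uv du dv]]]] := posnP (m 1 4); [by left | right].
  have uv_pend : exists u v, [&& pendent e u, e u v & branching e v].
    by exists u, v; rewrite /pendent /branching uv du dv.
  apply/eqP; rewrite -leqn0 leqNgt; apply/(ecount_gt0P _ _ _) => [[w1 [w2 [w12 d1 d2]]]].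
  have [z brz] := ct_exists_branching.
  case: (adjacent_deg2_long_path e_sym e_irr e_conn e_acyc (ltnW ct_card) w12 d1 d2 brz).
    by case=> x [p [/int1 -> ]].
  by case=> x [p [pp]]; rewrite ltnNge (pend2 uv_pend x p pp).
split.
- exact: internal_path_deg4_short.
- by move=> _ [u [v /and3P [_ /eqP du _]]]; have := deg_neq_of_ndeg0 u N3_0; rewrite du.
- move=> [u [v /and3P [/eqP du uv /br4 dv]]] x p pp; case: x14_x22 => [x14 | x22].
    by have := ecount_gt0 uv; rewrite du dv x14.
  rewrite leqNgt; apply/negP => /(pendent_path_deg2_edge pp) [w1 [w2 [w12 d1 d2]]].
  by have := ecount_gt0 w12; rewrite d1 d2 x22.
- by move=> v d3; have := deg_neq_of_ndeg0 v N3_0; rewrite d3.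
- by apply/deg4_tree_iff; split=> //; rewrite N4_b.
Qed.

Lemma prime_conditions_BT2 : BT2 n b e ->
  prime_conditions e <-> m 4 4 + 2 = 2 * N 4 /\ (m 1 4 = 0 \/ m 3 3 = 0).
Proof.
have [e_sym _ _ _] := ct_tree.
case=> _ N4_ _ _; have N2_0 : N 2 = 0 by case: ct_profile; lia.
have no2 v : deg e v != 2 := deg_neq_of_ndeg0 v N2_0.
have short x p : 0 < size p -> all (fun w => deg e w == 2) (inner x p) -> size p = 1.
  by move=> sz /(inner_nil_of_no_deg2 no2) inner0; rewrite (size_inner x sz) inner0.
split=> [[_ no33 _ _ F_tree] | [count4 x14_x33]].
  have [_ count4] := deg4_tree_iff.1 F_tree; split=> //.
  have [->|/ecount_gt0P [u [v [uv du dv]]]] := posnP (m 1 4); [by left | right].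
  apply/eqP; rewrite -leqn0 leqNgt; apply/(ecount_gt0P _ _ _) => [[a [c [ac da dc]]]].
  by apply: no33; [exists u, v; rewrite /pendent uv du dv | exists a, c; rewrite ac da dc].
split.
- by move=> x p /and5P [_ sz _ _ /(short x p sz)].
- move=> pend4 [a [c /and3P [ac /eqP da /eqP dc]]]; case: x14_x33 => [x14|x33].
    case: pend4 => u [v /and3P [/eqP du uv /eqP dv]].
    by have := ecount_gt0 uv; rewrite du dv x14.
  by have := ecount_gt0 ac; rewrite da dc x33.
- by move=> _ x p /and5P [_ sz _ _ /(short x p sz) ->].
- move=> w /eqP dw; rewrite leqNgt; apply/negP => /card_gt1P [x [y [wx wy xy]]].
  move: wx wy; rewrite !inE => /andP [wx /eqP dx] /andP [wy /eqP dy].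
  have neq4 u : deg e u = 4 -> u != w by move=> du; apply/eqP => uw; move: dw; rewrite -uw du.
  suff : [:: w] = [::] by [].
  apply: (deg4_no_detour count4 dx dy); rewrite /= ?dw ?andbT //.
    by rewrite e_sym wx wy.
  by rewrite !inE negb_or (neq4 x dx) [w == y]eq_sym (neq4 y dy) andbT.
- by apply/deg4_tree_iff; split=> //; rewrite N4_; lia.
Qed.

Lemma BT1'_iff : BT1' n b e <->
  [/\ N 4 = b, N 2 = n - 3 * b - 2, N 1 = 2 * b + 2, m 4 4 + 2 = 2 * N 4
    & m 1 4 = 0 \/ m 2 2 = 0].
Proof.
split=> [[BT /(prime_conditions_BT1 BT) [count4 x14_x22]] | [N4 N2 N1 count4 x14_x22]].
  by case: BT.
have BT : BT1 n b e by [].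
by split=> //; apply/(prime_conditions_BT1 BT).
Qed.

Lemma BT2'_iff : BT2' n b e <->
  [/\ N 4 = n - 2 * b - 2, N 3 = 3 * b + 2 - n, N 1 = n - b, m 4 4 + 2 = 2 * N 4
    & m 1 4 = 0 \/ m 3 3 = 0].
Proof.
split=> [[BT /(prime_conditions_BT2 BT) [count4 x14_x33]] | [N4 N3 N1 count4 x14_x33]].
  by case: BT.
have BT : BT2 n b e by [].
by split=> //; apply/(prime_conditions_BT2 BT).
Qed.

End ChemicalTree.

Unset Implicit Arguments.

(* Conditions on b are written with denominators cleared:
   b <= (n-4)/5  <->  5b+4 <= n ;  b < (n-2)/3  <->  3b+2 < n ;
   b < (3n-4)/7  <->  7b+4 < 3n ;  b < n/2 - 1  <->  2b+2 < n. *)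
Theorem theorem4 (n b : nat) (e : rel 'I_n) :
  1 <= b -> 2 * b + 2 < n -> CTstar n b e ->
  [/\ 5 * b + 4 <= n ->
        (((M2 e)%:Z <= 4 * n%:Z + 16 * b%:Z - 12)%R
         /\ (((M2 e)%:Z = 4 * n%:Z + 16 * b%:Z - 12 :> int)%R <-> BT1' n b e)),
      n < 5 * b + 4 -> 3 * b + 2 < n ->
        (((M2 e)%:Z <= 6 * n%:Z + 6 * b%:Z - 20)%R
         /\ (((M2 e)%:Z = 6 * n%:Z + 6 * b%:Z - 20 :> int)%R <-> BT1' n b e)),
      n <= 3 * b + 2 -> 7 * b + 4 < 3 * n ->
        (((M2 e)%:Z <= 10 * n%:Z - 6 * b%:Z - 28)%R
         /\ (((M2 e)%:Z = 10 * n%:Z - 6 * b%:Z - 28 :> int)%R <-> BT2' n b e))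
    & 3 * n <= 7 * b + 4 ->
        (((M2 e)%:Z <= 16 * n%:Z - 20 * b%:Z - 36)%R
         /\ (((M2 e)%:Z = 16 * n%:Z - 20 * b%:Z - 36 :> int)%R <-> BT2' n b e))].
Proof.
move=> b_gt0 n_gt e_ct; have prof := ct_profile b_gt0 n_gt e_ct.
have BT1'E := iff_sym (BT1'_iff b_gt0 n_gt e_ct).
have BT2'E := iff_sym (BT2'_iff b_gt0 n_gt e_ct).
split=> [r1 | r2 r2' | r3 r3' | r4].
- by have [? eqv] := profile_regime1 prof r1; split=> //; apply: iff_trans eqv BT1'E.
- by have [? eqv] := profile_regime2 prof r2 r2'; split=> //; apply: iff_trans eqv BT1'E.
- by have [? eqv] := profile_regime3 prof n_gt r3 r3'; split=> //; apply: iff_trans eqv BT2'E.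
- by have [? eqv] := profile_regime4 prof n_gt r4; split=> //; apply: iff_trans eqv BT2'E.
Qed.
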